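(* Let $\mathbb{K}$ be a field, let $P_1, P_2 \in \mathbb{K}[X]$ be irreducible polynomials with $P_1' \neq 0$ and $P_2' \neq 0$, and let $k \geq 1$ be an integer. Then the rings $\mathbb{K}[X]/(P_1^k)$ and $\mathbb{K}[X]/(P_2^k)$ are isomorphic if and only if the fields $\mathbb{K}[X]/(P_1)$ and $\mathbb{K}[X]/(P_2)$ are isomorphic (as rings).
   Context: $\mathbb{K}$ is an arbitrary field; $P'$ denotes the formal derivative (for irreducible $P$, $P'\neq0$ means $P$ is separable). The rings $\mathbb{K}[X]/(P_i^k)$ are local with residue field $\mathbb{K}[X]/(P_i)$. *)

From HB Require Import structures.
From mathcomp Require Import all_boot all_order all_algebra.
Set Implicit Arguments. Unset Strict Implicit. Unset Printing Implicit Defensive.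
Import GRing.Theory.
Local Open Scope ring_scope.

(* The quotient ring K[X]/(p), realized with MathComp's qpoly construction.
   qpoly quotients by a monic polynomial of size > 1, so we quotient by the
   monic associate (lead_coef p)^-1 *: p, which generates the same ideal (p)
   whenever p != 0. *)
Definition quot_poly (K : fieldType) (p : {poly K}) : comNzRingType :=
  {poly %/ ((lead_coef p)^-1 *: p)}.

Definition ring_iso (A B : nzRingType) : Prop :=
  exists f : {rmorphism A -> B}, bijective f.

From HB Require Import structures.
From mathcomp Require Import all_boot all_order all_algebra.
From mathcomp Require Import ring.
Import GRing.Theory.
Local Open Scope ring_scope.
Set Implicit Arguments. Unset Strict Implicit. Unset Printing Implicit Defensive.

(* Write A = K[X]/(P^k), L = K[X]/(P) and pi for the class of P in A.  Since P
   is separable, Newton-Hensel iteration lifts the root X of P modulo P to a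
   root Y of P modulo P^k, and p |-> p(Y) is a ring section s : L -> A of the
   reduction A -> L.  Evaluating polynomials with coefficients lifted by s at
   pi then gives A ~ L[T]/(T^k), so an isomorphism of the residue fields lifts
   to the truncated rings.  Conversely the kernel of A -> L is nilpotent while
   L is reduced, so any isomorphism of the A's descends to the residue fields
   through the sections. *)

Definition reduced (R : nzRingType) := forall (x : R) n, x ^+ n = 0 -> x = 0.

Section InverseRMorphism.
Variables (R S : nzRingType) (f : {rmorphism R -> S}) (g : S -> R).
Hypotheses (fK : cancel f g) (gK : cancel g f).

Fact inv_zmod_morphism : zmod_morphism g.
Proof. exact: can2_zmod_morphism fK gK. Qed.
Fact inv_monoid_morphism : monoid_morphism g.
Proof. exact: can2_monoid_morphism fK gK. Qed.

Definition rmorph_inv : S -> R := g.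
HB.instance Definition _ :=
  GRing.isZmodMorphism.Build S R rmorph_inv inv_zmod_morphism.
HB.instance Definition _ :=
  GRing.isMonoidMorphism.Build S R rmorph_inv inv_monoid_morphism.

Lemma exists_rmorph_inv : exists h : {rmorphism S -> R}, cancel f h /\ cancel h f.
Proof. by exists rmorph_inv. Qed.

End InverseRMorphism.

Lemma ring_iso_inv (R S : nzRingType) : ring_iso R S ->
  exists (f : {rmorphism R -> S}) (g : {rmorphism S -> R}), cancel f g /\ cancel g f.
Proof.
case=> f [g fK gK]; have [h [fhK hfK]] := exists_rmorph_inv fK gK.
by exists f, h.
Qed.

Section TruncatedPresentation.
Variables (A L : comNzRingType) (red : {rmorphism A -> L}).
Variables (s : {rmorphism L -> A}) (pi : A) (k : nat).

(* Axioms making [T |-> pi], with coefficients lifted by [s], an isomorphism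
   [L[T]/(T^k) ~ A]; see [eval_pi_surj] and [eval_pi_eq0]. *)
Record trunc_pres : Prop := TruncPres {
  red_liftK : cancel s red;
  pi_nil : pi ^+ k = 0;
  red_pi : red pi = 0;
  ker_red : forall a, red a = 0 -> exists b, a = pi * b;
  red_ann_pi : forall m b, (m < k)%N -> pi ^+ m * b = 0 -> red b = 0 }.

Fact lift_comm_pi : commr_rmorph s pi. Proof. by move=> x; apply: mulrC. Qed.
Definition eval_pi := horner_morph lift_comm_pi.
HB.instance Definition _ := GRing.RMorphism.on eval_pi.

Lemma eval_piX : eval_pi 'X = pi. Proof. exact: horner_morphX. Qed.
Lemma eval_piC c : eval_pi c%:P = s c. Proof. exact: horner_morphC. Qed.

Hypothesis hP : trunc_pres.

Lemma trunc_pres_ker_nil a : red a = 0 -> a ^+ k = 0.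
Proof. by case/(ker_red hP)=> b ->; rewrite exprMn pi_nil ?mul0r. Qed.

Lemma eval_pi_XnC m c : eval_pi ('X^m * c%:P) = pi ^+ m * s c.
Proof. by rewrite rmorphM rmorphXn /= eval_piX eval_piC. Qed.

Lemma eval_pi_Xk q : eval_pi (q * 'X^k) = 0.
Proof. by rewrite rmorphM rmorphXn /= eval_piX pi_nil ?mulr0. Qed.

(* Approximate [a] modulo [pi^m], correcting the remainder by a lifted residue. *)
Lemma eval_pi_surj a : exists q, eval_pi q = a.
Proof.
suff approx m : exists q b, a = eval_pi q + pi ^+ m * b.
  by have [q [b ->]] := approx k; exists q; rewrite pi_nil // mul0r addr0.
elim: m => [|m [q [b ->]]].
  by exists 0, a; rewrite rmorph0 expr0 mul1r add0r.
have /(ker_red hP) [b' bE] : red (b - s (red b)) = 0.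
  by rewrite rmorphB /= red_liftK // subrr.
exists (q + 'X^m * (red b)%:P), b'.
rewrite rmorphD /= eval_pi_XnC exprSr -mulrA -bE -addrA -mulrDr.
by congr (_ + _ * _); rewrite addrC subrK.
Qed.

Lemma eval_pi_small_eq0 (r : {poly L}) n :
  (size r + n <= k)%N -> pi ^+ n * eval_pi r = 0 -> r = 0.
Proof.
elim/poly_ind: r n => [//|r c IHr] n size_le ann.
have [// | rXc_neq0] := eqVneq (r * 'X + c%:P) 0.
have n_lt_k : (n < k)%N.
  by apply: leq_trans size_le; rewrite addnC -addn1 leq_add2l size_poly_gt0.
have eval_rXc : eval_pi (r * 'X + c%:P) = eval_pi r * pi + s c.
  by rewrite rmorphD rmorphM /= eval_piX eval_piC.
have c0 : c = 0.
  move: ann => /(red_ann_pi hP n_lt_k); rewrite eval_rXc rmorphD rmorphM /=.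
  by rewrite red_pi // mulr0 add0r red_liftK.
move: rXc_neq0 size_le ann; rewrite c0 polyC0 addr0 => rX_neq0.
have r_neq0 : r != 0 by apply: contraNneq rX_neq0 => ->; rewrite mul0r.
rewrite size_mulX // addSnnS => size_le ann; rewrite (IHr n.+1) ?mul0r //.
by rewrite -ann rmorphM /= eval_piX exprSr mulrAC mulrA.
Qed.

Lemma eval_pi_eq0 q : eval_pi q = 0 <-> exists w, q = w * 'X^k.
Proof.
split=> [q0 | [w ->]]; last exact: eval_pi_Xk.
exists (drop_poly k q); have qE := poly_take_drop k q.
suff t0 : take_poly k q = 0 by rewrite -[LHS]qE t0 add0r.
apply: (@eval_pi_small_eq0 _ 0); first by rewrite addn0 size_take_poly.
by rewrite expr0 mul1r; move: q0; rewrite -{1}qE rmorphD /= eval_pi_Xk addr0.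
Qed.

End TruncatedPresentation.

Section LiftResidueIso.
Variables (A1 L1 A2 L2 : comNzRingType) (k : nat).
Variables (red1 : {rmorphism A1 -> L1}) (s1 : {rmorphism L1 -> A1}) (pi1 : A1).
Variables (red2 : {rmorphism A2 -> L2}) (s2 : {rmorphism L2 -> A2}) (pi2 : A2).
Hypotheses (hP1 : trunc_pres red1 s1 pi1 k) (hP2 : trunc_pres red2 s2 pi2 k).
Variable sigma : {rmorphism L1 -> L2}.

Local Notation eval1 := (eval_pi s1 pi1).
Local Notation eval2 := (eval_pi s2 pi2).

Let eval1_surj a : exists q, eval1 q == a.
Proof. by have [q qa] := eval_pi_surj hP1 a; exists q; apply/eqP. Qed.

Definition eval1_inv a := xchoose (eval1_surj a).

Lemma eval1_invK a : eval1 (eval1_inv a) = a.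
Proof. exact/eqP/(xchooseP (eval1_surj a)). Qed.

(* Well defined because [sigma] maps the kernel [(X^k)] of [eval1] into the
   kernel of [eval2]. *)
Definition lift_map a := eval2 (map_poly sigma (eval1_inv a)).

Lemma lift_map_eval q : lift_map (eval1 q) = eval2 (map_poly sigma q).
Proof.
have /(eval_pi_eq0 hP1) [w wE] : eval1 (eval1_inv (eval1 q) - q) = 0.
  by rewrite rmorphB /= eval1_invK subrr.
apply/eqP; rewrite -subr_eq0 -!rmorphB /= wE; apply/eqP/(eval_pi_eq0 hP2).
by exists (map_poly sigma w); rewrite rmorphM /= map_polyXn.
Qed.

Fact lift_map_zmod : zmod_morphism lift_map.
Proof.
move=> a b; rewrite -(eval1_invK a) -(eval1_invK b) -rmorphB.
by rewrite !lift_map_eval !rmorphB.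
Qed.

Fact lift_map_monoid : monoid_morphism lift_map.
Proof.
split=> [|a b]; first by rewrite -(rmorph1 eval1) lift_map_eval !rmorph1.
by rewrite -(eval1_invK a) -(eval1_invK b) -rmorphM !lift_map_eval !rmorphM.
Qed.

HB.instance Definition _ := GRing.isZmodMorphism.Build A1 A2 lift_map lift_map_zmod.
HB.instance Definition _ :=
  GRing.isMonoidMorphism.Build A1 A2 lift_map lift_map_monoid.

Lemma exists_lift_rmorph : exists F : {rmorphism A1 -> A2},
  forall q, F (eval1 q) = eval2 (map_poly sigma q).
Proof. by exists lift_map; apply: lift_map_eval. Qed.

End LiftResidueIso.

Lemma trunc_pres_ring_iso (A1 L1 A2 L2 : comNzRingType) (k : nat)
    (red1 : {rmorphism A1 -> L1}) (s1 : {rmorphism L1 -> A1}) (pi1 : A1)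
    (red2 : {rmorphism A2 -> L2}) (s2 : {rmorphism L2 -> A2}) (pi2 : A2) :
  trunc_pres red1 s1 pi1 k -> trunc_pres red2 s2 pi2 k ->
  ring_iso L1 L2 -> ring_iso A1 A2.
Proof.
move=> hP1 hP2 /ring_iso_inv [sigma [tau [sigmaK tauK]]].
have [F FE] := exists_lift_rmorph hP1 hP2 sigma.
have [G GE] := exists_lift_rmorph hP2 hP1 tau.
exists F, G => a.
  have [q <-] := eval_pi_surj hP1 a.
  by rewrite FE GE -map_poly_comp (eq_map_poly sigmaK) map_poly_id.
have [q <-] := eval_pi_surj hP2 a.
by rewrite GE FE -map_poly_comp (eq_map_poly tauK) map_poly_id.
Qed.

Lemma residue_mapK (A1 L1 A2 L2 : comNzRingType)
    (red1 : {rmorphism A1 -> L1}) (s1 : {rmorphism L1 -> A1})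
    (red2 : {rmorphism A2 -> L2}) (s2 : {rmorphism L2 -> A2})
    (f : {rmorphism A1 -> A2}) (g : {rmorphism A2 -> A1}) :
  cancel s1 red1 -> cancel s2 red2 ->
  (forall a, red1 a = 0 -> exists n, a ^+ n = 0) -> reduced L2 ->
  cancel g f -> cancel (red1 \o g \o s2) (red2 \o f \o s1).
Proof.
move=> s1K s2K ker1_nil L2_red gK a /=; set b := g (s2 a).
have [n nil_n] : exists n, (s1 (red1 b) - b) ^+ n = 0.
  by apply: ker1_nil; rewrite rmorphB /= s1K subrr.
have : red2 (f (s1 (red1 b) - b)) = 0.
  by apply: (L2_red _ n); rewrite -!rmorphXn /= nil_n !rmorph0.
by rewrite !rmorphB /= gK s2K => /eqP; rewrite subr_eq0 => /eqP.
Qed.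

Lemma ring_iso_residue (A1 L1 A2 L2 : comNzRingType)
    (red1 : {rmorphism A1 -> L1}) (s1 : {rmorphism L1 -> A1})
    (red2 : {rmorphism A2 -> L2}) (s2 : {rmorphism L2 -> A2}) :
  cancel s1 red1 -> cancel s2 red2 ->
  (forall a, red1 a = 0 -> exists n, a ^+ n = 0) ->
  (forall a, red2 a = 0 -> exists n, a ^+ n = 0) ->
  reduced L1 -> reduced L2 ->
  ring_iso A1 A2 -> ring_iso L1 L2.
Proof.
move=> s1K s2K ker1_nil ker2_nil L1_red L2_red /ring_iso_inv [f [g [fK gK]]].
exists (red2 \o f \o s1), (red1 \o g \o s2).
  exact: residue_mapK s2K s1K ker2_nil L1_red fK.
exact: residue_mapK s1K s2K ker1_nil L2_red gK.
Qed.

Lemma horner_taylor1 (R : comNzRingType) (p : {poly R}) (a h : R) :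
  exists W, p.[a + h] = p.[a] + p^`().[a] * h + h ^+ 2 * W.
Proof.
elim/poly_ind: p => [|p c [W IHp]]; first by exists 0; rewrite deriv0 !horner0; ring.
exists (p^`().[a] + W * (a + h)).
by rewrite derivMXaddC !hornerMXaddC IHp hornerD hornerMX; ring.
Qed.

Lemma comp_poly_taylor1 (R : comNzRingType) (p a h : {poly R}) :
  exists W, p \Po (a + h) = p \Po a + (p^`() \Po a) * h + h ^+ 2 * W.
Proof.
have [W pE] := horner_taylor1 (p ^:P) a h.
by exists W; rewrite /comp_poly pE deriv_map.
Qed.

Lemma dvdp_comp_polyB (R : idomainType) (p Y d : {poly R}) :
  d %| Y - 'X -> d %| p \Po Y - p.
Proof.
have [W] := comp_poly_taylor1 p 'X (Y - 'X).
rewrite addrC subrK comp_polyXr => ->.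
have -> : p + (p^`() \Po 'X) * (Y - 'X) + (Y - 'X) ^+ 2 * W - p =
          ((p^`() \Po 'X) + (Y - 'X) * W) * (Y - 'X) by ring.
exact: dvdp_mull.
Qed.

(* Newton iteration [Y |-> Y - P(Y) V] with [V] an inverse of [P'] modulo [P]. *)
Lemma hensel_lift_X (K : fieldType) (P : {poly K}) k :
  coprimep P P^`() -> exists Y, (P ^+ k.+1 %| P \Po Y) && (P %| Y - 'X).
Proof.
case/Bezout_eq1_coprimepP=> [[u V] /= bezout].
elim: k => [|m [Y /andP [/dvdpP [w PY] XY]]].
  by exists 'X; rewrite comp_polyXr expr1 dvdpp subrr dvdp0.
have /dvdpP [t P'Y] := dvdp_comp_polyB P^`() XY.
set h := - (w * P ^+ m.+1) * V.
exists (Y + h); apply/andP; split.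
  have [W ->] := comp_poly_taylor1 P Y h.
  apply/dvdpP; exists (w * u - t * w * V + w ^+ 2 * P ^+ m * V ^+ 2 * W).
  have -> : P^`() \Po Y = P^`() + t * P by rewrite -P'Y addrC subrK.
  rewrite PY -[w * P ^+ m.+1]mulr1 -bezout /h !exprS; ring.
rewrite addrAC dvdp_add //; apply/dvdpP; exists (- (w * P ^+ m * V)).
by rewrite /h exprS; ring.
Qed.

Lemma irredp_coprime_deriv (K : fieldType) (P : {poly K}) :
  irreducible_poly P -> P^`() != 0 -> coprimep P P^`().
Proof.
move=> P_irr P'_neq0; rewrite irreducible_poly_coprime //.
by apply/negP => /(dvdp_leq P'_neq0); rewrite leqNgt lt_size_deriv ?irredp_neq0.
Qed.

Lemma irredp_dvdpX (K : fieldType) (P a : {poly K}) n :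
  irreducible_poly P -> P %| a ^+ n -> P %| a.
Proof.
move=> P_irr; apply: contraTT => P_ndvd_a.
have P_an : coprimep P (a ^+ n) by rewrite coprimep_expr ?irreducible_poly_coprime.
rewrite -[a ^+ n]mul1r Gauss_dvdpl // dvdp1.
by case: P_irr => /gtn_eqF ->.
Qed.

Local Notation monic_assoc d := ((lead_coef d)^-1 *: d).

Lemma in_qpoly_val (R : nzRingType) (d : {poly R}) (a : {poly %/ d}) :
  in_qpoly d (val a) = a.
Proof. by apply: val_inj; apply: in_qpoly_small; apply: size_mk_monic. Qed.

Section QuotPoly.
Variables (K : fieldType) (d : {poly K}).
Hypothesis size_d_gt1 : (1 < size d)%N.

Let lc_inv_neq0 : (lead_coef d)^-1 != 0.
Proof. by rewrite invr_neq0 // lead_coef_eq0 -size_poly_gt0 ltnW. Qed.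

Lemma mk_monic_assoc : mk_monic (monic_assoc d) = monic_assoc d.
Proof.
rewrite /mk_monic size_scale // size_d_gt1 monicE lead_coefZ mulVf ?eqxx //.
by rewrite -invr_eq0.
Qed.

Lemma in_qpoly_eq0 p : (in_qpoly (monic_assoc d) p == 0) = (d %| p).
Proof.
rewrite -val_eqE /= mk_monic_assoc -(dvdpZl _ _ lc_inv_neq0).
by rewrite Pdiv.WeakIdomain.dvdpE.
Qed.

Lemma in_qpoly_eq p q :
  (in_qpoly (monic_assoc d) p == in_qpoly (monic_assoc d) q) = (d %| p - q).
Proof. by rewrite -subr_eq0 -raddfB in_qpoly_eq0. Qed.

Lemma dvdp_in_qpolyB p : d %| val (in_qpoly (monic_assoc d) p) - p.
Proof. by rewrite -in_qpoly_eq in_qpoly_val. Qed.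

End QuotPoly.

Lemma reduced_quot_poly_irr (K : fieldType) (P : {poly K}) :
  irreducible_poly P -> reduced (quot_poly P).
Proof.
move=> P_irr x n; have size_P_gt1 : (1 < size P)%N by case: P_irr.
rewrite -(in_qpoly_val x) -rmorphXn => /eqP; rewrite in_qpoly_eq0 // => Pxn.
by apply/eqP; rewrite in_qpoly_eq0 // (irredp_dvdpX P_irr Pxn).
Qed.

Section SeparableQuotient.
Variables (K : fieldType) (P : {poly K}) (k : nat).
Hypotheses (P_irr : irreducible_poly P) (P'_neq0 : P^`() != 0) (k_gt0 : (0 < k)%N).

Let size_P_gt1 : (1 < size P)%N. Proof. by case: P_irr. Qed.

Let P_dvd_Pk : P %| P ^+ k.
Proof. by rewrite -{1}(expr1 P) dvdp_exp2l. Qed.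

Let size_Pk_gt1 : (1 < size (P ^+ k))%N.
Proof.
apply: leq_trans size_P_gt1 (dvdp_leq _ P_dvd_Pk).
by rewrite expf_neq0 ?irredp_neq0.
Qed.

Local Notation inA := (in_qpoly (monic_assoc (P ^+ k))).
Local Notation inL := (in_qpoly (monic_assoc P)).

Definition hensel_root :=
  xchoose (hensel_lift_X k.-1 (irredp_coprime_deriv P_irr P'_neq0)).

Lemma hensel_rootP : (P ^+ k %| P \Po hensel_root) && (P %| hensel_root - 'X).
Proof.
move: (xchooseP (hensel_lift_X k.-1 (irredp_coprime_deriv P_irr P'_neq0))).
by rewrite /hensel_root; set Y := xchoose _; rewrite prednK.
Qed.

Lemma dvdp_comp_hensel_root p q :
  P %| p - q -> P ^+ k %| (p \Po hensel_root) - (q \Po hensel_root).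
Proof.
case/dvdpP=> w pq; rewrite -comp_polyB pq comp_polyM dvdp_mull //.
by case/andP: hensel_rootP.
Qed.

Definition qpoly_red (a : quot_poly (P ^+ k)) : quot_poly P := inL (val a).

Lemma qpoly_red_in p : qpoly_red (inA p) = inL p.
Proof.
apply/eqP; rewrite in_qpoly_eq //.
exact: dvdp_trans P_dvd_Pk (dvdp_in_qpolyB _ _).
Qed.

Fact qpoly_red_zmod : zmod_morphism qpoly_red.
Proof. by move=> a b; rewrite /qpoly_red -raddfB. Qed.

Fact qpoly_red_monoid : monoid_morphism qpoly_red.
Proof.
split=> [|a b]; first by rewrite -(rmorph1 inA) qpoly_red_in rmorph1.
by rewrite -(in_qpoly_val a) -(in_qpoly_val b) -rmorphM !qpoly_red_in rmorphM.
Qed.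

HB.instance Definition _ := GRing.isZmodMorphism.Build _ _ qpoly_red qpoly_red_zmod.
HB.instance Definition _ :=
  GRing.isMonoidMorphism.Build _ _ qpoly_red qpoly_red_monoid.

Definition qpoly_lift (l : quot_poly P) : quot_poly (P ^+ k) :=
  inA (val l \Po hensel_root).

Lemma qpoly_lift_in p : qpoly_lift (inL p) = inA (p \Po hensel_root).
Proof.
apply/eqP; rewrite in_qpoly_eq //.
exact/dvdp_comp_hensel_root/dvdp_in_qpolyB.
Qed.

Fact qpoly_lift_zmod : zmod_morphism qpoly_lift.
Proof. by move=> a b; rewrite /qpoly_lift -raddfB -comp_polyB. Qed.

Fact qpoly_lift_monoid : monoid_morphism qpoly_lift.
Proof.
split=> [|a b].
  by rewrite -(rmorph1 inL) qpoly_lift_in -polyC1 comp_polyC polyC1 rmorph1.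
rewrite -(in_qpoly_val a) -(in_qpoly_val b) -rmorphM !qpoly_lift_in.
by rewrite comp_polyM rmorphM.
Qed.

HB.instance Definition _ := GRing.isZmodMorphism.Build _ _ qpoly_lift qpoly_lift_zmod.
HB.instance Definition _ :=
  GRing.isMonoidMorphism.Build _ _ qpoly_lift qpoly_lift_monoid.

Lemma qpoly_liftK : cancel qpoly_lift qpoly_red.
Proof.
move=> l; rewrite qpoly_red_in -[RHS]in_qpoly_val; apply/eqP; rewrite in_qpoly_eq //.
by apply: dvdp_comp_polyB; case/andP: hensel_rootP.
Qed.

Lemma qpoly_trunc_pres : trunc_pres qpoly_red qpoly_lift (inA P) k.
Proof.
split.
- exact: qpoly_liftK.
- by apply/eqP; rewrite -rmorphXn in_qpoly_eq0.
- by apply/eqP; rewrite /= qpoly_red_in in_qpoly_eq0.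
- move=> a /eqP; rewrite in_qpoly_eq0 // => /dvdpP [w aE].
  by exists (inA w); rewrite -(in_qpoly_val a) aE rmorphM mulrC.
- move=> m b m_lt_k; rewrite -(in_qpoly_val b) -rmorphXn -rmorphM => /eqP.
  rewrite in_qpoly_eq0 // => Pk_dvd.
  have Pk : P ^+ k = P ^+ m * P ^+ (k - m) by rewrite -exprD subnKC // ltnW.
  have : P ^+ m * P ^+ (k - m) %| P ^+ m * val b by rewrite -Pk.
  rewrite dvdp_mul2l ?expf_neq0 ?irredp_neq0 // => Pkm_b.
  apply/eqP; rewrite /= qpoly_red_in in_qpoly_eq0 //.
  by apply: dvdp_trans Pkm_b; rewrite -{1}(expr1 P) dvdp_exp2l // subn_gt0.
Qed.

End SeparableQuotient.

Theorem mainTheorem6 (K : fieldType) (P1 P2 : {poly K}) (k : nat) :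
  irreducible_poly P1 -> irreducible_poly P2 ->
  P1^`() != 0 -> P2^`() != 0 -> (1 <= k)%N ->
  (ring_iso (quot_poly (P1 ^+ k)) (quot_poly (P2 ^+ k)) <->
   ring_iso (quot_poly P1) (quot_poly P2)).
Proof.
move=> P1_irr P2_irr P1'_neq0 P2'_neq0 k_gt0.
have hP1 := qpoly_trunc_pres P1_irr P1'_neq0 k_gt0.
have hP2 := qpoly_trunc_pres P2_irr P2'_neq0 k_gt0.
split=> [isoA | isoL]; last exact: trunc_pres_ring_iso hP1 hP2 isoL.
apply: ring_iso_residue isoA.
- exact: red_liftK hP1.
- exact: red_liftK hP2.
- by move=> a /(trunc_pres_ker_nil hP1); exists k.
- by move=> a /(trunc_pres_ker_nil hP2); exists k.
- exact: reduced_quot_poly_irr.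
- exact: reduced_quot_poly_irr.
Qed.
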